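(* Let $n\ge 2$ be an integer and $A\subseteq L_n$. If the subset $L_n$ is $z$-embedded in $(X_n,\tau(A))$, then $L_n\setminus A$ does not contain a closed uncountable subset of $(L_n,\tau_E|_{L_n})$.
   Context: For $\overline{x},\overline{a}\in\mathbb R^n$ let $|\overline{x}-\overline{a}|$ be the Euclidean distance and $B(\overline{a},\epsilon)=\{\overline{x}\in\mathbb R^n:|\overline{x}-\overline{a}|<\epsilon\}$. Let $P_n=\{\overline{x}\in\mathbb R^n: x_n>0\}$, $L_n=\{\overline{x}\in\mathbb R^n: x_n=0\}$, $X_n=P_n\cup L_n$, and let $\tau_E$ denote the Euclidean topology on $X_n$. For $\overline{a}\in L_n$ and $\epsilon>0$ put $\overline{a(\epsilon)}=(a_1,\dots,a_{n-1},\epsilon)$ and $\tilde B(\overline{a},\epsilon)=\{\overline{a}\}\cup B(\overline{a(\epsilon)},\epsilon)$. For $A\subseteq L_n$, the topology $\tau(A)$ on $X_n$ is generated by the local bases: at $\overline{a}\in P_n$, the sets $B(\overline{a},\epsilon)$ with $0<\epsilon<a_n$; at $\overline{a}\in A$, the sets $B(\overline{a},\epsilon)\cap X_n$ with $\epsilon>0$; at $\overline{a}\in L_n\setminus A$, the sets $\tilde B(\overline{a},\epsilon)$ with $\epsilon>0$. A subset $Y$ of a space $X$ is $z$-embedded in $X$ if every zero set of $Y$ is the trace on $Y$ of some zero set of $X$. *)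

From mathcomp Require Import all_boot all_order all_algebra.
From mathcomp Require Import classical_sets cardinality reals.
Set Implicit Arguments. Unset Strict Implicit. Unset Printing Implicit Defensive.
Import Order.TTheory GRing.Theory Num.Theory.
Local Open Scope ring_scope.
Local Open Scope classical_set_scope.

Section Defs.
Variables (R : realType) (n : nat).

(* points of R^n, coordinates indexed by 'I_n (x_1..x_n <-> indices 0..n-1) *)
Definition pt := 'I_n -> R.

Definition edist (x a : pt) : R := Num.sqrt (\sum_(i < n) (x i - a i) ^+ 2).

Definition eball (a : pt) (e : R) : set pt := [set x | edist x a < e].

(* the last coordinate x_n (the unique index i with i+1 = n) *)
Definition lastc (x : pt) : R := \sum_(i < n | i.+1 == n) x i.

Definition Pn : set pt := [set x | 0 < lastc x].
Definition Ln : set pt := [set x | lastc x = 0].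
Definition Xn : set pt := Pn `|` Ln.

Definition raise (a : pt) (e : R) : pt := fun i => if i.+1 == n then e else a i.

Definition tball (a : pt) (e : R) : set pt := [set a] `|` eball (raise a e) e.

Definition tau_basic (A : set pt) (a : pt) (U : set pt) : Prop :=
  [/\ Pn a & exists e, [/\ 0 < e, e < lastc a & U = eball a e]]
  \/ [/\ A a & exists e, 0 < e /\ U = eball a e `&` Xn]
  \/ [/\ Ln a, ~ A a & exists e, 0 < e /\ U = tball a e].

(* f : Y -> R continuous, Y ⊆ X_n carrying the subspace topology of tau(A)
   (values of f outside Y are irrelevant) *)
Definition tau_cont (A : set pt) (Y : set pt) (f : pt -> R) : Prop :=
  forall y, Y y -> forall eps, 0 < eps ->
    exists U, tau_basic A y U /\ (forall z, U z -> Y z -> `|f z - f y| < eps).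

(* Y is z-embedded in (X_n, tau(A)): every zero set of Y is the trace on Y
   of a zero set of X_n *)
Definition z_embedded (A : set pt) (Y : set pt) : Prop :=
  forall g, tau_cont A Y g ->
    exists f, tau_cont A Xn f /\ (forall y, Y y -> (f y = 0 <-> g y = 0)).

Definition closed_in_Ln (C : set pt) : Prop :=
  forall x, Ln x -> (forall e, 0 < e -> exists c, C c /\ edist c x < e) -> C x.

End Defs.

(* Let C ⊆ L_n \ A be closed and uncountable.  For every rational box meeting C in an
   uncountable set choose a condensation point of that intersection; these form a countable
   set D ⊆ C.  The indicator of L_n \ D is τ(A)-continuous on L_n: near a point of A it is
   constant because C is closed and misses A, and at any other point of L_n a basic
   neighbourhood meets L_n only in that point.  By z-embedding there is a continuous f on X_n
   whose zeros in L_n are exactly D.  At x ∈ C \ D, which is not in A, continuity gives a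
   tangent ball at x on which |f| stays away from 0, so C \ D is covered by countably many
   sets E_k of points with such a ball of size 1/(k+1).  At a point of D the function vanishes,
   and since tangent balls at close points of L_n intersect, every point of D has a Euclidean
   neighbourhood missing E_k.  A nested sequence of rational boxes, each meeting C uncountably
   and steered by the condensation points, then converges to a point of C lying neither in D
   nor in any E_k: a contradiction. *)

From mathcomp Require Import all_boot all_order all_algebra.
From mathcomp Require Import classical_sets cardinality reals boolp.
From mathcomp Require Import ring lra.
Import Order.TTheory GRing.Theory Num.Theory.
Local Open Scope ring_scope.
Local Open Scope classical_set_scope.
Set Implicit Arguments. Unset Strict Implicit. Unset Printing Implicit Defensive.

Lemma countable_setU T (X Y : set T) :
  countable X -> countable Y -> countable (X `|` Y).
Proof.
move=> cX cY; have -> : X `|` Y = \bigcup_(i in [set: bool]) (if i then X else Y).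
  by apply/seteqP; split=> [x [Xx|Yx]|x [[] _ h]]; [exists true|exists false|left|right].
by apply: bigcup_countable => // -[].
Qed.

Lemma uncountable_neq0 T (X : set T) : ~ countable X -> X !=set0.
Proof. by move=> nX; apply: infinite_setN0; apply: contra_not nX; apply: finite_set_countable. Qed.

Lemma invSn_lt (R : realType) (e : R) : 0 < e -> exists k : nat, k.+1%:R^-1 < e.
Proof. by move=> /ltr_add_invr[k]; rewrite add0r; exists k. Qed.

Section Cubes.
Variables (R : realType) (n : nat).
Local Notation pt := (pt R n).

Definition sqdist (x a : pt) : R := \sum_(i < n) (x i - a i) ^+ 2.

Lemma sqdistC x a : sqdist x a = sqdist a x.
Proof. by apply: eq_bigr => i _; rewrite -sqrrN opprB. Qed.

Lemma sqdist_coord (x a : pt) i : (x i - a i) ^+ 2 <= sqdist x a.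
Proof. by rewrite /sqdist (bigD1 i) //= lerDl sumr_ge0 // => j _; apply: sqr_ge0. Qed.

Lemma sqdist_segment_l (c c' : pt) t :
  sqdist (fun i => c i + t * (c' i - c i)) c = t ^+ 2 * sqdist c' c.
Proof.
by rewrite /sqdist mulr_sumr; apply: eq_bigr => i _; rewrite -exprMn /=; congr (_ ^+ 2); ring.
Qed.

Lemma sqdist_segment_r (c c' : pt) t :
  sqdist (fun i => c i + t * (c' i - c i)) c' = (1 - t) ^+ 2 * sqdist c c'.
Proof.
by rewrite /sqdist mulr_sumr; apply: eq_bigr => i _; rewrite -exprMn /=; congr (_ ^+ 2); ring.
Qed.

Lemma edist_lt (x a : pt) e : 0 < e -> (edist x a < e) = (sqdist x a < e ^+ 2).
Proof.
by move=> e0; rewrite /edist -[X in _ < X]gtr0_norm // -sqrtr_sqr ltr_sqrt ?exprn_gt0.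
Qed.

Definition cube (d : pt) (e : R) : set pt := [set y | forall i, `|y i - d i| <= e].

Lemma cube_le d e e' : e <= e' -> cube d e `<=` cube d e'.
Proof. by move=> ee' y yd i; apply: le_trans (yd i) ee'. Qed.

Lemma sqdist_cube_lt (k : R) : 0 < k ->
  exists2 d : R, 0 < d & forall x a, cube a d x -> sqdist x a < k.
Proof.
move=> k0; pose N : R := n%:R + 1.
have N0 : 0 < N by rewrite ltr_wpDl.
exists (Num.sqrt (k / N)); first by rewrite sqrtr_gt0 divr_gt0.
move=> x a xa; apply: (@le_lt_trans _ _ (\sum_(i < n) (k / N))).
  apply: ler_sum => i _; rewrite -real_normK ?num_real // -[k / N]sqr_sqrtr; last first.
    by rewrite divr_ge0 ?ltW.
  by rewrite ler_sqr ?nnegrE ?sqrtr_ge0 ?xa.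
by rewrite sumr_const card_ord -mulr_natr mulrAC ltr_pdivrMr // ltr_pM2l // ltrDl.
Qed.

Definition cube_closed (C : set pt) :=
  forall d, (forall e, 0 < e -> exists2 c, C c & cube d e c) -> C d.

Definition condensation_pt (S : set pt) (d : pt) :=
  forall e, 0 < e -> ~ countable (S `&` cube d e).

Lemma condensation_pt_mem C S d : cube_closed C -> condensation_pt (C `&` S) d -> C d.
Proof.
move=> Ccl cd; apply: Ccl => e e0.
by have [c [[Cc _] dc]] := uncountable_neq0 (cd e e0); exists c.
Qed.

End Cubes.

Section RationalBoxes.
Variables (R : realType) (n : nat).
Local Notation pt := (pt R n).

Definition rbox := ({ffun 'I_n -> rat} * {ffun 'I_n -> rat})%type.

Definition box (b : rbox) : set pt :=
  [set x | forall i, ratr (b.1 i) <= x i <= ratr (b.2 i)].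

Definition rbox_meet (b b' : rbox) : rbox :=
  ([ffun i => Num.max (b.1 i) (b'.1 i)], [ffun i => Num.min (b.2 i) (b'.2 i)]).

Lemma box_meet b b' : box (rbox_meet b b') = box b `&` box b'.
Proof.
apply/seteqP; split=> x /=.
  move=> h; split=> i; have := h i; rewrite !ffunE maxr_rat minr_rat ge_max le_min.
    by case/andP=> /andP[-> _] /andP[-> _].
  by case/andP=> /andP[_ ->] /andP[_ ->].
move=> [h1 h2] i; rewrite !ffunE maxr_rat minr_rat ge_max le_min.
by case/andP: (h1 i) => -> ->; case/andP: (h2 i) => -> ->.
Qed.

Lemma rbox_around (x : pt) e : 0 < e -> exists b, box b x /\ box b `<=` cube x e.
Proof.
move=> e0.
have lo i : {q : rat | x i - e < ratr q < x i}.
  apply: cid; have [|q] := @rat_in_itvoo R (x i - e) (x i); first by rewrite gtrBl.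
  by rewrite in_itv /=; exists q.
have hi i : {q : rat | x i < ratr q < x i + e}.
  apply: cid; have [|q] := @rat_in_itvoo R (x i) (x i + e); first by rewrite ltrDl.
  by rewrite in_itv /=; exists q.
exists ([ffun i => sval (lo i)], [ffun i => sval (hi i)]); split=> [i|y yb i] /=.
  by rewrite !ffunE; case: (lo i) => q /= /andP[_ /ltW ->]; case: (hi i) => q' /= /andP[/ltW -> _].
have /andP[] := yb i; rewrite !ffunE; case: (lo i) => q /= /andP[lq _].
by case: (hi i) => q' /= /andP[_ q'h] ly yh; rewrite ler_norml; apply/andP; split; lra.
Qed.

Definition big (C : set pt) (b : rbox) := ~ countable (C `&` box b).

(* Otherwise the countably many non-big subboxes with property [P], together with
   [N], would cover the uncountable set [C `&` box b]. *)
Lemma big_subbox C N b (P : set pt -> Prop) :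
  countable N -> big C b -> (forall S T, S `<=` T -> P T -> P S) ->
  (forall x, C x -> box b x -> ~ N x -> exists2 e, 0 < e & P (cube x e)) ->
  exists b', [/\ box b' `<=` box b, big C b' & P (box b')].
Proof.
move=> cN Cb Pmono HP; apply: contrapT => nb; apply: Cb.
pose I := [set b' | box b' `<=` box b /\ P (box b')].
apply: (@sub_countable _ _ _ (N `|` \bigcup_(b' in I) (C `&` box b'))).
  apply: subset_card_le => x [Cx bx]; have [Nx|nNx] := pselect (N x); [by left|right].
  have [e e0 Pe] := HP x Cx bx nNx; have [b'' [xb'' b''e]] := rbox_around x e0.
  exists (rbox_meet b b''); last by rewrite box_meet.
  rewrite /I /= box_meet; split; first exact: subIsetl.
  by apply: Pmono Pe => y [_ /b''e].
apply: countable_setU cN _; apply: bigcup_countable; first exact: countableP.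
by move=> b' [b'b Pb']; apply: contrapT => b'C; apply: nb; exists b'.
Qed.

Lemma big_subbox_small C b d : 0 < d -> big C b -> exists b', [/\ box b' `<=` box b,
  big C b' & forall y y', box b' y -> box b' y' -> cube y' d y].
Proof.
move=> d0 Cb; apply: (@big_subbox C set0 b (fun S => forall y y', S y -> S y' -> cube y' d y)).
- exact: countable0.
- exact: Cb.
- by move=> S T ST PT y y' /ST Ty /ST Ty'; apply: PT.
move=> x _ _ _; exists (d / 2); first by rewrite divr_gt0.
move=> y y' xy xy' i; move: (xy i) (xy' i); rewrite !ler_norml => /andP[? ?] /andP[? ?].
by apply/andP; split; lra.
Qed.

Lemma big_subbox_notin C b (d : pt) : big C b ->
  exists b', [/\ box b' `<=` box b, big C b' & ~ box b' d].
Proof.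
move=> Cb; apply: (@big_subbox C [set d] b (fun S => ~ S d)).
- exact: countable1.
- exact: Cb.
- by move=> S T ST nTd /ST.
move=> x _ _ xd; have [i xdi] : exists i, x i != d i.
  apply: contrapT => /forallNP nxd; apply: xd; apply/funext => i.
  by apply/eqP/negPn/negP; apply: nxd.
exists (`|x i - d i| / 2); first by rewrite divr_gt0 // normr_gt0 subr_eq0.
have : 0 < `|x i - d i| by rewrite normr_gt0 subr_eq0.
by move=> + /(_ i); rewrite distrC; lra.
Qed.

Lemma big_condensation_pt C b : big C b -> exists d, condensation_pt (C `&` box b) d.
Proof.
move=> Cb; apply: contrapT => /forallNP nd.
have HP x : C x -> box b x -> ~ set0 x ->
    exists2 e, 0 < e & countable (C `&` box b `&` cube x e).
  by move=> _ _ _; have /existsNP[e /not_implyP[e0 /contrapT ce]] := nd x; exists e.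
have [b' [b'b Cb' cb']] := @big_subbox C set0 b (fun S => countable (C `&` box b `&` S))
  (countable0 _) Cb (fun S T ST => sub_countable (subset_card_le (setIS ST))) HP.
apply: Cb'; apply: sub_countable cb'; apply: subset_card_le => y [Cy b'y].
by split => //; split => //; apply: b'b.
Qed.

Lemma big_subbox_near C b d (e : R) : condensation_pt (C `&` box b) d -> 0 < e ->
  exists b', [/\ box b' `<=` box b, big C b' & box b' `<=` cube d e].
Proof.
move=> cd e0; have e20 : 0 < e / 2 by rewrite divr_gt0.
have Cb : big (C `&` cube d (e / 2)) b by rewrite /big setIAC; apply: cd.
have HP x : (C `&` cube d (e / 2)) x -> box b x -> ~ set0 x ->
    exists2 e', 0 < e' & cube x e' `<=` cube d e.
  move=> [_ xd] _ _; exists (e / 2) => // y yx i; move: (xd i) (yx i).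
  by rewrite !ler_norml => /andP[? ?] /andP[? ?]; apply/andP; split; lra.
have [b' [b'b Cb' b'd]] := @big_subbox _ set0 b (fun S => S `<=` cube d e)
  (countable0 _) Cb (fun S T ST Te => subset_trans ST Te) HP.
exists b'; split => // cC; apply: Cb'; apply: sub_countable cC.
by apply: subset_card_le => y [[Cy _] b'y].
Qed.

Lemma exists_big C : ~ countable C -> exists b, big C b.
Proof.
move=> nC; apply: contrapT => /forallNP nb; apply: nC.
apply: (@sub_countable _ _ _ (\bigcup_(b in [set: rbox]) (C `&` box b))).
  apply: subset_card_le => x Cx; have [b [xb _]] := rbox_around x (@ltr01 R).
  by exists b.
by apply: bigcup_countable => [|b _]; [exact: countableP|exact: contrapT (nb b)].
Qed.

Lemma nested_boxes_meet (Q : nat -> rbox) :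
  (forall k, box (Q k.+1) `<=` box (Q k)) -> (forall k, exists y, box (Q k) y) ->
  exists x, forall k, box (Q k) x.
Proof.
move=> QS Qne.
have Qmono k j : (k <= j)%N -> box (Q j) `<=` box (Q k).
  apply: (@homo_leq _ (box \o Q) (fun A B => B `<=` A)) => [A|B A C' BA CB|//].
    exact: subset_refl.
  exact: subset_trans CB BA.
pose lo i k : R := ratr ((Q k).1 i); pose hi i k : R := ratr ((Q k).2 i).
have lo_hi i k j : lo i k <= hi i j.
  have [y Qy] := Qne (maxn k j).
  have /andP[+ _] := Qmono _ _ (leq_maxl k j) y Qy i.
  by have /andP[_ /[swap]] := Qmono _ _ (leq_maxr k j) y Qy i; apply: le_trans.
have lo_ne i : range (lo i) !=set0 by exists (lo i 0%N), 0%N.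
exists (fun i => sup (range (lo i))) => k i; apply/andP; split.
  by apply: sup_upper_bound; [split=> //; exists (hi i 0%N) => _ [j _ <-]; apply: lo_hi|exists k].
by apply: ge_sup => // _ [j _ <-]; apply: lo_hi.
Qed.

Lemma condensation_seq C : cube_closed C -> ~ countable C -> exists p : nat -> pt,
  (forall j, C (p j)) /\ forall b, big C b -> exists j, condensation_pt (C `&` box b) (p j).
Proof.
move=> Ccl nC; have [c0 Cc0] := uncountable_neq0 nC.
have /choice[sel selP] : forall b, exists d, C d /\ (big C b -> condensation_pt (C `&` box b) d).
  move=> b; have [Cb|nCb] := pselect (big C b); last by exists c0.
  by have [d cd] := big_condensation_pt Cb; exists d; split => //; apply: condensation_pt_mem cd.
exists (fun j => if unpickle j is Some b then sel b else c0); split => [j|b Cb].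
  by case: unpickle => [b|] //; case: (selP b).
by exists (pickle b); rewrite pickleK; case: (selP b) => _; apply.
Qed.

Section CondensationBaire.
Variables (C : set pt) (E : nat -> set pt) (p : nat -> pt).
Hypothesis p_condensation : forall b, big C b -> exists j, condensation_pt (C `&` box b) (p j).
Hypothesis p_off_E : forall j k, exists2 e, 0 < e & forall y, cube (p j) e y -> ~ E k y.

Definition refines k b b' := [/\ box b' `<=` box b, big C b',
  forall y y', box b' y -> box b' y' -> cube y' k.+1%:R^-1 y,
  ~ box b' (p k) & forall y, box b' y -> ~ E k y].

Lemma big_refines k b : big C b -> exists b', refines k b b'.
Proof.
move=> Cb; have [j cj] := p_condensation Cb; have [e e0 eE] := p_off_E j k.
have [b1 [b1b Cb1 b1e]] := big_subbox_near cj e0.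
have [b2 [b2b1 Cb2 nb2]] := big_subbox_notin (p k) Cb1.
have k0 : 0 < k.+1%:R^-1 :> R by rewrite invr_gt0 ltr0Sn.
have [b3 [b3b2 Cb3 b3s]] := big_subbox_small k0 Cb2.
exists b3; split => //; first by move=> y /b3b2 /b2b1 /b1b.
- by move/b3b2.
- by move=> y /b3b2 /b2b1 /b1e /eE.
Qed.

Lemma condensation_Baire : cube_closed C -> ~ countable C ->
  exists x, [/\ C x, forall j, x <> p j & forall k, ~ E k x].
Proof.
move=> Ccl nC; have [b0 Cb0] := exists_big nC.
have /choice[next nextP] : forall kb : nat * rbox, exists b',
    big C kb.2 -> refines kb.1 kb.2 b'.
  move=> [k b]; have [Cb|nCb] := pselect (big C b); last by exists b.
  by have [b' ?] := big_refines k Cb; exists b'.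
pose Q := fix Q k := if k is k'.+1 then next (k', Q k') else b0.
have QP k : big C (Q k) /\ refines k (Q k) (Q k.+1).
  elim: k => [|k [_ [_ CQ _ _ _]]]; first by split => //; apply: (nextP (0%N, b0)).
  by split => //; apply: (nextP (k.+1, Q k.+1)).
have [x xQ] : exists x, forall k, box (Q k) x.
  apply: nested_boxes_meet => k; first by case: (QP k) => _ [].
  by have [y [_ Qy]] := uncountable_neq0 (QP k).1; exists y.
exists x; split => [|j xj|k xE].
- apply: Ccl => e e0; have [k ke] := invSn_lt e0.
  have [c [Cc Qc]] := uncountable_neq0 (QP k.+1).1; exists c => //.
  by case: (QP k) => _ [_ _ Qs _ _]; apply: (cube_le (ltW ke)); apply: Qs Qc (xQ _).
- by case: (QP j) => _ [_ _ _ + _]; apply; rewrite -xj; apply: xQ.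
- by case: (QP k) => _ [_ _ _ _]; apply; [apply: xQ|].
Qed.

End CondensationBaire.

End RationalBoxes.

Section TangentBalls.
Variables (R : realType) (m : nat).
Local Notation n := m.+1.
Local Notation pt := (pt R n).

Lemma lastcE (x : pt) : lastc x = x ord_max.
Proof. by rewrite /lastc (big_pred1 ord_max). Qed.

Lemma raise_max (a : pt) e : raise a e ord_max = e.
Proof. by rewrite /raise eqxx. Qed.

Lemma raise_neq (a : pt) e i : i != ord_max -> raise a e i = a i.
Proof. by move=> iN; rewrite /raise ifF //; apply: contraNF iN => /eqP[im]; apply/eqP/val_inj. Qed.

Lemma eball_raise_Pn (y z : pt) e : 0 < e -> eball (raise y e) e z -> Pn z.
Proof.
move=> e0; rewrite /eball /= edist_lt // /Pn /= lastcE => ze.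
have := le_lt_trans (sqdist_coord _ _ ord_max) ze; rewrite raise_max; nra.
Qed.

Lemma sqdist_raise (a d : pt) r s : Ln a -> Ln d ->
  sqdist (raise d s) (raise a r) = (s - r) ^+ 2 + sqdist d a.
Proof.
rewrite /Ln /= !lastcE => a0 d0.
rewrite /sqdist (bigD1 ord_max) //= [in RHS](bigD1 ord_max) //=.
rewrite !raise_max a0 d0 subrr expr0n /= add0r; congr (_ + _).
by apply: eq_bigr => i iN; rewrite !raise_neq.
Qed.

(* The centres of the two balls are at distance sqrt((s - r)^2 + |a - d|^2) < r + s. *)
Lemma tangent_balls_meet (a d : pt) r s : 0 < r -> 0 < s -> Ln a -> Ln d ->
  sqdist a d < 4 * r * s -> exists z, eball (raise a r) r z /\ eball (raise d s) s z.
Proof.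
move=> r0 s0 La Ld ad; have rs0 : 0 < r + s by rewrite addr_gt0.
pose t := r / (r + s); have tE : t * (r + s) = r by rewrite mulfVK ?gt_eqF.
have t0 : 0 < t by rewrite divr_gt0.
have t1E : (1 - t) * (r + s) = s by rewrite mulrBl tE mul1r addrC addKr.
have t1 : 0 < 1 - t by rewrite -(pmulr_lgt0 _ rs0) t1E.
clearbody t.
have centres : sqdist (raise d s) (raise a r) < (r + s) ^+ 2.
  by rewrite sqdist_raise // sqdistC; nra.
exists (fun i => raise a r i + t * (raise d s i - raise a r i)); rewrite /eball /= !edist_lt //.
rewrite sqdist_segment_l sqdist_segment_r [sqdist (raise a r) _]sqdistC.
rewrite -[X in _ < X ^+ 2]tE -[X in _ /\ _ < X ^+ 2]t1E.
by split; rewrite exprMn ltr_pM2l ?exprn_gt0.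
Qed.

End TangentBalls.

Section TauTopology.
Variables (R : realType) (m : nat) (A : set (pt R m.+1)).
Local Notation pt := (pt R m.+1).
Local Notation Ln := (@Ln R m.+1).
Local Notation Xn := (@Xn R m.+1).

Lemma closed_in_Ln_cube_closed (C : set pt) : C `<=` Ln -> closed_in_Ln C -> cube_closed C.
Proof.
move=> CL Ccl d dC; have Ld : Ln d.
  rewrite /Ln /= lastcE; apply/eqP; rewrite -normr_le0; apply/ler_addgt0Pr => e e0.
  have [c /CL] := dC e e0; rewrite /Ln /= lastcE => c0 /(_ ord_max).
  by rewrite c0 sub0r normrN add0r.
apply: (Ccl d Ld) => e e0; have [r r0 rsq] := sqdist_cube_lt m.+1 (exprn_gt0 2 e0).
by have [c Cc dc] := dC r r0; exists c; rewrite edist_lt // rsq.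
Qed.

Lemma closed_in_Ln_away (C : set pt) a : closed_in_Ln C -> Ln a -> ~ C a ->
  exists2 e, 0 < e & forall z, edist z a < e -> ~ C z.
Proof.
move=> Ccl La nCa; apply: contrapT => nE; apply/nCa/Ccl => // e e0.
by apply: contrapT => nC; apply: nE; exists e => // z za Cz; apply: nC; exists z.
Qed.

(* Away from [A], a basic neighbourhood of a point of [Ln] meets [Ln] only in that point. *)
Lemma tau_cont_Ln (g : pt -> R) :
  (forall a, A a -> Ln a -> exists2 e, 0 < e & forall z, Ln z -> edist z a < e -> g z = g a) ->
  tau_cont A Ln g.
Proof.
move=> gA y Ly eps eps0; have [Ay|nAy] := pselect (A y).
  have [e e0 ge] := gA y Ay Ly; exists (eball y e `&` Xn); split.
    by right; left; split => //; exists e.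
  by move=> z [ze _] Lz; rewrite ge // subrr normr0.
exists (tball y 1); split; first by right; right; split => //; exists 1.
move=> z [->|zy]; first by rewrite subrr normr0.
by have := eball_raise_Pn ltr01 zy; rewrite /Pn /Ln /= => /gt_eqF/eqP.
Qed.

Lemma tau_cont_tangent f y eps : tau_cont A Xn f -> Ln y -> ~ A y -> 0 < eps ->
  exists2 e, 0 < e & forall z, eball (raise y e) e z -> `|f z - f y| < eps.
Proof.
move=> f_cont Ly nAy eps0; have [U [yU fU]] := f_cont y (or_intror Ly) eps eps0.
case: yU => [[Py _]|[[Ay _]|[_ _ [e [e0 UE]]]]] //.
  by move: Py; rewrite /Pn /= (Ly : lastc y = 0) ltxx.
exists e => // z zy; apply: fU; first by rewrite UE; right.
by left; apply: eball_raise_Pn zy.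
Qed.

Section TangentAway.
Variables (f : pt -> R).
Hypothesis f_cont : tau_cont A Xn f.

Definition tangent_away k := [set x : pt | Ln x /\ exists2 r, k.+1%:R^-1 <= r &
  forall z, eball (raise x r) r z -> k.+1%:R^-1 < `|f z|].

Lemma tangent_away_cover x : Ln x -> ~ A x -> f x != 0 -> exists k, tangent_away k x.
Proof.
move=> Lx nAx fx0; have fx2 : 0 < `|f x| / 2 by rewrite divr_gt0 ?normr_gt0.
have [e e0 fe] := tau_cont_tangent f_cont Lx nAx fx2.
have [k] : exists k : nat, k.+1%:R^-1 < Num.min e (`|f x| / 2).
  by apply: invSn_lt; rewrite lt_min e0.
rewrite lt_min => /andP[ke kf]; exists k; split => //; exists e; first exact: ltW.
move=> z /fe; have := lerB_dist (f x) (f z); rewrite (distrC (f x)).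
by set ik := k.+1%:R^-1 in kf *; lra.
Qed.

(* Tangent balls at nearby points of [Ln] meet, and [|f|] is small on one at [d]. *)
Lemma tangent_away_zero d k : Ln d -> ~ A d -> f d = 0 ->
  exists2 e, 0 < e & forall y, cube d e y -> ~ tangent_away k y.
Proof.
move=> Ld nAd fd0; have k0 : 0 < k.+1%:R^-1 :> R by rewrite invr_gt0 ltr0Sn.
have [s s0 fs] := tau_cont_tangent f_cont Ld nAd k0.
have [e e0 esq] := sqdist_cube_lt m.+1 (mulr_gt0 s0 k0).
exists e => // y yd [Ly [r kr fr]]; have r0 := lt_le_trans k0 kr.
have [|z [zy zd]] := tangent_balls_meet r0 s0 Ly Ld.
  by apply: lt_le_trans (esq _ _ yd) _; set ik := k.+1%:R^-1 in k0 kr *; nra.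
by have := fr z zy; have := fs z zd; rewrite fd0 subr0 => /lt_trans/[apply]; rewrite ltxx.
Qed.

End TangentAway.

End TauTopology.

Theorem mainTheorem20 (R : realType) (n : nat) (A : set (pt R n)) :
  (2 <= n)%N -> A `<=` @Ln R n -> z_embedded A (@Ln R n) ->
  ~ (exists C : set (pt R n),
       [/\ C `<=` @Ln R n `\` A, closed_in_Ln C & ~ countable C]).
Proof.
case: n A => [|m] A // _ _ zA [C [CLA Ccl nC]].
have CL : C `<=` @Ln R m.+1 by move=> c /CLA[].
have Ccc := closed_in_Ln_cube_closed CL Ccl.
have [p [pC p_cond]] := condensation_seq Ccc nC.
have [g g0 g1] : exists2 g : pt R m.+1 -> R,
    (forall y, g y = 0 <-> range p y) & forall y, ~ C y -> g y = 1.
  exists (fun y => if pselect (range p y) then 0 else 1) => y.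
    by case: (pselect (range p y)) => [py|npy]; split => // /eqP; rewrite oner_eq0.
  by case: (pselect (range p y)) => // -[j _ pj] []; rewrite -pj.
have [f [f_cont fg]] : exists f,
    tau_cont A (@Xn R m.+1) f /\ forall y, Ln y -> (f y = 0 <-> g y = 0).
  apply: zA; apply: tau_cont_Ln => a Aa La.
  have [e e0 eC] := closed_in_Ln_away Ccl La (fun Ca => (CLA a Ca).2 Aa).
  by exists e => // z _ /eC nCz; rewrite !g1 // => /CLA[].
have [x [Cx xp xE]] : exists x, [/\ C x, forall j, x <> p j & forall k, ~ tangent_away f k x].
  apply: condensation_Baire p_cond _ Ccc nC => j k; have [Lp nAp] := CLA _ (pC j).
  have fp0 : f (p j) = 0 by apply/fg => //; apply/g0; exists j.
  by have [e e0 eE] := tangent_away_zero f_cont k Lp nAp fp0; exists e.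
have [Lx nAx] := CLA x Cx; have [|k] := tangent_away_cover f_cont Lx nAx; last exact: xE.
by apply/eqP => /(fg x Lx)/g0[j _ px]; apply: (xp j).
Qed.
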